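(* Let $\Omega\subset\mathbb{R}^n$ be a bounded Lipschitz domain, $T>0$, $\Omega_T=(0,T]\times\Omega$, $W$ a Hilbert space of measurable functions on $\Omega_T$ continuously embedded in $L^2(0,T;L^2(\Omega))$, $y_0\in L^2(\Omega)$, and $S:L^2(0,T;\mathbb{R}^2)\to W$ a continuous affine map with $\|S(u)\|_W\le C(\|u\|_{L^2(0,T;\mathbb{R}^2)}+\|y_0\|_{L^2(\Omega)})$ for a constant $C$ independent of $u,y_0$; let $S_0$ be its linear part (the map $S$ with $y_0=0$) and $\|S_0\|$ its operator norm from $L^2(0,T;\mathbb{R}^2)$ to $L^2(0,T;L^2(\omega_{\mathrm{obs}}))$, where $\omega_{\mathrm{obs}}\subset\Omega$. Let $y^d\in L^2(0,T;L^2(\omega_{\mathrm{obs}}))$, $\alpha>0$, and let $\mathcal{U}$ be the space of $\mathbb{R}^2$-valued functions on $[0,T]$ that are piecewise constant on a given grid $0=t_1<\dots<t_M=T$. Let $\beta>\|S_0\|^2+\alpha$ and let $\bar u\in\mathcal{U}$ be a local minimizer over $\mathcal{U}$ of $$J_\beta(u)=\frac12\|Su-y^d\|^2_{L^2(0,T;L^2(\omega_{\mathrm{obs}}))}+\frac\alpha2\|u\|^2_{L^2(0,T;\mathbb{R}^2)}+\beta\int_0^T|u_1(t)u_2(t)|\,dt.$$ Then $\bar u_1(t)\bar u_2(t)=0$ for all $t\in[0,T]$.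
   Context: $Su=S(u)$ is the state for control $u=(u_1,u_2)$, restricted to $(0,T)\times\omega_{\mathrm{obs}}$ in the tracking term. Piecewise constant means constant on each interval $(t_j,t_{j+1}]$. *)

From HB Require Import structures.
From mathcomp Require Import all_boot all_order all_algebra.
From mathcomp Require Import all_classical all_reals all_analysis.
Set Implicit Arguments. Unset Strict Implicit. Unset Printing Implicit Defensive.
Import Order.TTheory GRing.Theory Num.Theory.
Import numFieldNormedType.Exports.
Local Open Scope classical_set_scope.
Local Open Scope ring_scope.

(* A (representative of a) control u = (u_1, u_2) : R -> R^2, as a pair of
   real functions of time. *)
Definition ctrl (R : realType) := ((R -> R) * (R -> R))%type.

Section Defs.
Variable R : realType.

Definition czero : ctrl R := (fun _ => 0, fun _ => 0).
Definition cadd (u v : ctrl R) : ctrl R :=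
  (fun t => u.1 t + v.1 t, fun t => u.2 t + v.2 t).
Definition cscale (a : R) (u : ctrl R) : ctrl R :=
  (fun t => a * u.1 t, fun t => a * u.2 t).
Definition csub (u v : ctrl R) : ctrl R := cadd u (cscale (-1) v).

Definition L2ctrl (T : R) (u : ctrl R) : Prop :=
  [/\ measurable_fun `]0, T[ u.1, measurable_fun `]0, T[ u.2,
      (\int[lebesgue_measure]_(x in `]0%R, T[) ((u.1 x) ^+ 2)%:E
         < +oo)%E &
      (\int[lebesgue_measure]_(x in `]0%R, T[) ((u.2 x) ^+ 2)%:E
         < +oo)%E].

(* the norm of L^2(0,T;R^2) (meaningful for u with L2ctrl T u) *)
Definition cnorm (T : R) (u : ctrl R) : R :=
  Num.sqrt (Rintegral lebesgue_measure `]0, T[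
                      (fun t => u.1 t ^+ 2 + u.2 t ^+ 2)).

(* ip is an inner product on the normed space V inducing its norm;
   together with completeness of V this makes V a real Hilbert space. *)
Definition inner_product_of_norm (V : normedModType R) (ip : V -> V -> R)
  : Prop :=
  [/\ forall x y, ip x y = ip y x,
      forall (a : R) (x y z : V), ip (a *: x + y) z = a * ip x z + ip y z &
      forall x, `|x| ^+ 2 = ip x x].

Definition affine_on_L2 (V : normedModType R) (T : R) (S : ctrl R -> V)
  : Prop :=
  forall u v (l : R), L2ctrl T u -> L2ctrl T v ->
    S (cadd (cscale l u) (cscale (1 - l) v)) = l *: S u + (1 - l) *: S v.

Definition continuous_on_L2 (V : normedModType R) (T : R) (S : ctrl R -> V)
  : Prop :=
  forall u, L2ctrl T u -> forall e : R, 0 < e ->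
    exists2 d : R, 0 < d & forall v, L2ctrl T v ->
      cnorm T (csub v u) < d -> `|S v - S u| < e.

Definition lin_part (V : normedModType R) (S : ctrl R -> V) : ctrl R -> V :=
  fun u => S u - S czero.

Definition opnorm (V : normedModType R) (T : R) (A : ctrl R -> V) : R :=
  sup ((fun u => `|A u|) @` [set u | L2ctrl T u /\ cnorm T u <= 1]).

Definition time_grid (T : R) (M : nat) (grid : nat -> R) : Prop :=
  [/\ grid 0%N = 0, grid M = T &
      forall j : nat, (j < M)%N -> grid j < grid j.+1].

(* u is piecewise constant on the grid: u = c j on (t_j, t_{j+1}]
   (and u(0) = c 0, i.e. the first piece is [t_0, t_1]). *)
Definition pw_const (M : nat) (grid : nat -> R) (u : ctrl R) : Prop :=
  exists c : nat -> R * R,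
    [/\ u.1 0 = (c 0%N).1, u.2 0 = (c 0%N).2 &
        forall (j : nat) (t : R), (j < M)%N -> grid j < t <= grid j.+1 ->
          u.1 t = (c j).1 /\ u.2 t = (c j).2].

(* the objective J_beta; obsS u is the observed state (S u) restricted to
   (0,T) x omega_obs, an element of the Hilbert space H. *)
Definition Jbeta (H : normedModType R) (T alpha beta : R)
  (obsS : ctrl R -> H) (yd : H) (u : ctrl R) : R :=
  2^-1 * `|obsS u - yd| ^+ 2 + alpha / 2 * cnorm T u ^+ 2
  + beta * Rintegral lebesgue_measure `]0, T[ (fun t => `|u.1 t * u.2 t|).

End Defs.

From Pilot Require Import Defs.
From HB Require Import structures.
From mathcomp Require Import all_boot all_order all_algebra.
From mathcomp Require Import all_classical all_reals all_analysis.
From mathcomp Require Import ring lra.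
(* Re-imported so that [cadd], [cscale] and [czero] denote the controls of
   Defs and not the charges of mathcomp-analysis. *)
Import Defs.
Import Order.TTheory GRing.Theory Num.Theory.
Import numFieldNormedType.Exports.
Local Open Scope classical_set_scope.
Local Open Scope ring_scope.
Set Implicit Arguments. Unset Strict Implicit. Unset Printing Implicit Defensive.

(* If u1 u2 <> 0 at some time, the control equals a constant (a, b) with
   a b <> 0 on a whole grid interval I of length m > 0.  Perturb it along
   v = 1_I (1, -sgn(a b)), which keeps it piecewise constant.  For small |s|
   the product (a + s)(b - sgn(a b) s) keeps the sign of a b, so the sparsity
   term changes by exactly (s (sgn(a b) b - a) - s^2) m, and the other two
   terms are quadratic in s.  Hence
     J(u + s v) = J(u) + s A + s^2 B,
     B = |S0 v|^2 / 2 + alpha m - beta m <= m (|S0|^2 + alpha - beta) < 0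
   since |v|^2 = 2 m, and a quadratic with negative leading coefficient has no
   local minimum at s = 0. *)

Lemma quadratic_local_min_lead_ge0 (R : realFieldType) (A B d : R) :
  0 < d -> (forall s, `|s| <= d -> 0 <= s * A + s ^+ 2 * B) -> 0 <= B.
Proof.
move=> d_gt0 hmin.
have := hmin d; have := hmin (- d).
rewrite normrN sqrrN gtr0_norm // lexx => /(_ isT) hN /(_ isT) hP.
have : 0 <= d ^+ 2 * B by lra.
by rewrite pmulr_rge0 // exprn_gt0.
Qed.

Lemma normr_mul_perturb (R : realFieldType) (a b : R) : a * b != 0 ->
  exists2 d : R, 0 < d & forall s, `|s| <= d ->
    `|(a + s) * (b - Num.sg (a * b) * s)|
      = `|a * b| + s * (Num.sg (a * b) * b - a) - s ^+ 2.
Proof.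
move=> ab_neq0.
have n_gt0 : 0 < `|a| + `|b| + 1 by rewrite ltr_wpDl // addr_ge0.
exists (Num.min 1 (`|a * b| / (`|a| + `|b| + 1))).
  by rewrite lt_min ltr01 divr_gt0 // normr_gt0.
move=> s; rewrite le_min ler_pdivlMr // => /andP[s_le1 s_small].
have sg2 : Num.sg (a * b) ^+ 2 = 1 by rewrite sqr_sg ab_neq0.
have nsg : `|Num.sg (a * b)| = 1 by rewrite normr_sg ab_neq0.
have sgab : Num.sg (a * b) * (a * b) = `|a * b| by rewrite -normrEsg.
move: (Num.sg (a * b)) sg2 nsg sgab => sg sg2 nsg sgab.
have expand : sg * ((a + s) * (b - sg * s))
    = `|a * b| + s * (sg * b - a) - s ^+ 2.
  transitivity (sg * (a * b) + s * (sg * b - sg ^+ 2 * a) - sg ^+ 2 * s ^+ 2).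
    by ring.
  by rewrite sg2 sgab !mul1r.
have lin_bound : `|s * (sg * b - a)| <= `|s| * (`|a| + `|b|).
  rewrite normrM ler_wpM2l // (le_trans (ler_normB _ _)) //.
  by rewrite normrM nsg mul1r addrC.
have sqr_bound : s ^+ 2 <= `|s|.
  by rewrite -real_normK ?num_real // expr2 ler_piMl.
have : 0 <= sg * ((a + s) * (b - sg * s)).
  rewrite expand; move: lin_bound; rewrite ler_norml => /andP[lb _]; nra.
by rewrite -expand => /ger0_norm <-; rewrite normrM nsg mul1r.
Qed.

Lemma inner_product_normDZ (R : realType) (V : normedModType R)
    (ip : V -> V -> R) (w z : V) (s : R) : inner_product_of_norm ip ->
  `|w + s *: z| ^+ 2 = `|w| ^+ 2 + 2 * s * ip w z + s ^+ 2 * `|z| ^+ 2.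
Proof.
case=> ip_sym ip_lin ip_norm.
have ipDl y : ip (w + s *: z) y = s * ip z y + ip w y by rewrite addrC ip_lin.
rewrite !ip_norm ipDl ip_sym ipDl (ip_sym w (w + _)) ipDl (ip_sym z w); ring.
Qed.

Lemma fine_lebesgue_measure_gt0 (R : realType) (a b c d : R) (X : set R) :
  a < b -> measurable X -> `]a, b[ `<=` X -> X `<=` `]c, d[ ->
  0 < fine (lebesgue_measure X).
Proof.
move=> ab mX abX Xcd.
have lb : ((b - a)%:E <= lebesgue_measure X)%E.
  have := lebesgue_measure_itv `]a, b[; rewrite /= lte_fin ab -EFinD => <-.
  by apply: le_measure => //; rewrite inE.
have ub : (lebesgue_measure X < +oo)%E.
  have mcd : measurable `]c, d[ by exact: measurable_itv.
  rewrite (le_lt_trans (le_measure lebesgue_measure (mem_set mX) (mem_set mcd) Xcd)) //.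
  by have := lebesgue_measure_itv `]c, d[; rewrite /= => ->; case: ifP => _; rewrite ?ltry.
move: lb ub; case: (lebesgue_measure X) => [r||] //=.
by rewrite lee_fin => hr _; lra.
Qed.

Lemma csub_addZ (R : realType) (u v : ctrl R) (s : R) :
  csub (cadd u (cscale s v)) u = cscale s v.
Proof. by congr pair; apply/funext => t /=; ring. Qed.

Section Grid.
Variables (R : realType) (T : R) (M : nat) (grid : nat -> R).
Hypothesis hgrid : time_grid T M grid.

Lemma grid_le i j : (i <= j <= M)%N -> grid i <= grid j.
Proof.
case: hgrid => _ _ grid_lt /andP[]; elim: j => [|j IH].
  by rewrite leqn0 => /eqP ->.
rewrite leq_eqVlt ltnS => /orP[/eqP -> //|ij jM].
exact: le_trans (IH ij (ltnW jM)) (ltW (grid_lt j jM)).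
Qed.

Lemma grid_ge0 j : (j <= M)%N -> 0 <= grid j.
Proof. by case: hgrid => g0 _ _ jM; rewrite -g0 grid_le. Qed.

Lemma grid_leT j : (j <= M)%N -> grid j <= T.
Proof. by case: hgrid => _ gM _ jM; rewrite -gM grid_le // jM leqnn. Qed.

Lemma grid_piece t : 0 < t <= T ->
  exists2 j, (j < M)%N & grid j < t <= grid j.+1.
Proof.
case: hgrid => g0 gM _ /andP[t_gt0]; rewrite -gM.
suff : forall k, grid k >= t -> exists2 j, (j < k)%N & grid j < t <= grid j.+1.
  by move=> /[apply] -[j jM hj]; exists j.
elim=> [|k IH] t_le; first by move: (lt_le_trans t_gt0 t_le); rewrite g0 ltxx.
have [t_lek|t_gtk] := leP t (grid k).
  by have [j jk hj] := IH t_lek; exists j => //; exact: ltnW.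
by exists k => //; rewrite t_gtk.
Qed.

Lemma grid_piece_uniq i j t : (i < M)%N -> (j < M)%N ->
  grid i < t <= grid i.+1 -> grid j < t <= grid j.+1 -> i = j.
Proof.
move=> iM jM /andP[gi_lt t_lei] /andP[gj_lt t_lej].
without loss ij : i j iM jM gi_lt t_lei gj_lt t_lej / (i < j)%N.
  move=> wlog; case: (ltngtP i j) => // [ij|ji]; first exact: wlog.
  by apply/esym/wlog.
have := grid_le (i := i.+1) (j := j); rewrite ij ltnW //= => /(_ isT) gij.
by have := lt_le_trans gj_lt (le_trans t_lei gij); rewrite ltxx.
Qed.

Definition grid_step (f : R -> R) := exists d : nat -> R,
  forall j t, (j < M)%N -> grid j < t <= grid j.+1 -> f t = d j.

Lemma grid_step_map2 (F : R -> R -> R) f g : grid_step f -> grid_step g ->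
  grid_step (fun t => F (f t) (g t)).
Proof.
move=> [d hd] [d' hd']; exists (fun j => F (d j) (d' j)) => j t jM ht.
by rewrite (hd j t) ?(hd' j t).
Qed.

Lemma grid_step_measurable f : grid_step f -> measurable_fun `]0, T[ f.
Proof.
move=> [d hd].
pose piece i : set R := if (i < M)%N then [set` `]grid i, grid i.+1]] else set0.
have mpiece i : measurable (piece i) by rewrite /piece; case: ifP.
apply: (measurable_funS (E := \bigcup_i piece i)).
- exact: bigcup_measurable.
- move=> t /=; rewrite in_itv /= => /andP[t_gt0 t_ltT].
  have /grid_piece[j jM hj] : 0 < t <= T by rewrite t_gt0 ltW.
  by exists j => //; rewrite /piece jM /= in_itv.
apply/measurable_fun_bigcup => // i; rewrite /piece; case: ifP => iM.
  apply: (eq_measurable_fun (cst (d i))); last exact: measurable_cst.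
  by move=> t; rewrite inE /= in_itv /= => ht; rewrite (hd i t).
exact: measurable_fun_set0.
Qed.

Lemma grid_step_integrable f : grid_step f ->
  lebesgue_measure.-integrable `]0, T[ (EFin \o f).
Proof.
move=> hf; apply: measurable_bounded_integrable => //.
- have := lebesgue_measure_itv `]0, T[; rewrite /= => ->.
  by case: ifP => //; rewrite -EFinD ltry.
- exact: grid_step_measurable.
case: hf => d hd; exists (\sum_(i < M) `|d i|); split; first exact: num_real.
move=> x x_gt t; rewrite /= in_itv /= => /andP[t_gt0 t_ltT].
have /grid_piece[j jM hj] : 0 < t <= T by rewrite t_gt0 ltW.
rewrite (hd j t) // (le_trans _ (ltW x_gt)) // (bigD1 (Ordinal jM)) //=.
by rewrite lerDl sumr_ge0.
Qed.

Lemma Rintegral_stepD f g k : grid_step f -> grid_step g ->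
  Rintegral lebesgue_measure `]0, T[ (fun t => f t + k * g t) =
  Rintegral lebesgue_measure `]0, T[ f
    + k * Rintegral lebesgue_measure `]0, T[ g.
Proof.
move=> hf hg; have kg := grid_step_map2 (fun _ y => k * y) hf hg.
by rewrite RintegralD ?RintegralZl //; exact: grid_step_integrable.
Qed.

End Grid.

Section GridControls.
Variables (R : realType) (T : R) (M : nat) (grid : nat -> R).
Hypothesis hgrid : time_grid T M grid.

Lemma pw_const_step u : pw_const M grid u ->
  grid_step M grid u.1 /\ grid_step M grid u.2.
Proof.
move=> [c [_ _ hc]]; split.
  by exists (fun j => (c j).1) => j t jM /(hc j t jM)[].
by exists (fun j => (c j).2) => j t jM /(hc j t jM)[].
Qed.

Lemma grid_step_sqr_integral_lty f : grid_step M grid f ->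
  (\int[lebesgue_measure]_(x in `]0%R, T[) ((f x) ^+ 2)%:E < +oo)%E.
Proof.
move=> hf; have /integrableP[_] := grid_step_integrable hgrid
  (grid_step_map2 (fun x _ => x ^+ 2) hf hf).
congr (_ < _)%E; apply: eq_integral => x _ /=.
by rewrite ger0_norm // sqr_ge0.
Qed.

Lemma pw_const_L2 u : pw_const M grid u -> L2ctrl T u.
Proof.
move=> /pw_const_step[h1 h2].
split.
- exact: (grid_step_measurable hgrid h1).
- exact: (grid_step_measurable hgrid h2).
- exact: (grid_step_sqr_integral_lty h1).
- exact: (grid_step_sqr_integral_lty h2).
Qed.

Lemma pw_const0 : pw_const M grid (@czero R).
Proof. by exists (fun _ => (0, 0)). Qed.

Lemma pw_const_add u v : pw_const M grid u -> pw_const M grid v ->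
  pw_const M grid (cadd u v).
Proof.
move=> [c [c1 c2 hc]] [c' [c1' c2' hc']].
exists (fun j => ((c j).1 + (c' j).1, (c j).2 + (c' j).2)).
split=> /=; rewrite ?c1 ?c1' ?c2 ?c2' // => j t jM ht.
by have [-> ->] := hc j t jM ht; have [-> ->] := hc' j t jM ht.
Qed.

Lemma pw_const_scale k u : pw_const M grid u -> pw_const M grid (cscale k u).
Proof.
move=> [c [c1 c2 hc]]; exists (fun j => (k * (c j).1, k * (c j).2)).
split=> /=; rewrite ?c1 ?c2 // => j t jM ht.
by have [-> ->] := hc j t jM ht.
Qed.

Lemma cnorm_sqr u : cnorm T u ^+ 2
  = Rintegral lebesgue_measure `]0, T[ (fun t => u.1 t ^+ 2 + u.2 t ^+ 2).
Proof. by rewrite sqr_sqrtr // Rintegral_ge0 // => t _; rewrite addr_ge0 ?sqr_ge0. Qed.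

Lemma cnorm_sqr_addZ u v s : pw_const M grid u -> pw_const M grid v ->
  cnorm T (cadd u (cscale s v)) ^+ 2 = cnorm T u ^+ 2
    + s * Rintegral lebesgue_measure `]0, T[
            (fun t => 2 * (u.1 t * v.1 t + u.2 t * v.2 t))
    + s ^+ 2 * cnorm T v ^+ 2.
Proof.
move=> /pw_const_step[u1 u2] /pw_const_step[v1 v2].
have uu := grid_step_map2 (fun x y => x ^+ 2 + y ^+ 2) u1 u2.
have vv := grid_step_map2 (fun x y => x ^+ 2 + y ^+ 2) v1 v2.
have uv := grid_step_map2 (fun x y => x + y)
  (grid_step_map2 (fun x y => x * y) u1 v1) (grid_step_map2 (fun x y => x * y) u2 v2).
have uv2 := grid_step_map2 (fun x _ => 2 * x) uv uv.
have lhs := grid_step_map2 (fun x y => x + s * y) uu uv2.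
rewrite !cnorm_sqr -!(Rintegral_stepD hgrid) //.
by apply: eq_Rintegral => t _ /=; ring.
Qed.

Lemma cnorm_scale k u : pw_const M grid u -> cnorm T (cscale k u) = `|k| * cnorm T u.
Proof.
move=> /pw_const_step[u1 u2].
have uu := grid_step_map2 (fun x y => x ^+ 2 + y ^+ 2) u1 u2.
rewrite /cnorm -sqrtr_sqr -sqrtrM ?sqr_ge0 //.
rewrite -(RintegralZl _ _ (grid_step_integrable hgrid uu)) //.
by congr Num.sqrt; apply: eq_Rintegral => t _ /=; ring.
Qed.

End GridControls.

Section AffineMap.
Variables (R : realType) (T : R) (M : nat) (grid : nat -> R).
Hypothesis hgrid : time_grid T M grid.
Variables (V : normedModType R) (S : ctrl R -> V).
Hypothesis S_affine : affine_on_L2 T S.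

Lemma affine_scale k u : pw_const M grid u ->
  S (cscale k u) = k *: S u + (1 - k) *: S (@czero R).
Proof.
move=> hu; have L2u := pw_const_L2 hgrid hu.
have L20 := pw_const_L2 hgrid (pw_const0 M grid).
rewrite -S_affine //.
by congr S; congr pair; apply/funext => t /=; rewrite mulr0 addr0.
Qed.

Lemma lin_partZ k u : pw_const M grid u ->
  lin_part S (cscale k u) = k *: lin_part S u.
Proof.
move=> hu; rewrite /lin_part affine_scale // scalerBl scale1r scalerBr.
by rewrite addrA addrAC addrK.
Qed.

Lemma affine_add u v : pw_const M grid u -> pw_const M grid v ->
  S (cadd u v) = S u + S v - S (@czero R).
Proof.
move=> hu hv.
have u2 : L2ctrl T (cscale 2 u) by exact/(pw_const_L2 hgrid)/pw_const_scale.
have v2 : L2ctrl T (cscale 2 v) by exact/(pw_const_L2 hgrid)/pw_const_scale.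
have -> : cadd u v = cadd (cscale 2^-1 (cscale 2 u)) (cscale (1 - 2^-1) (cscale 2 v)).
  by congr pair; apply/funext => t /=; field.
rewrite S_affine // !affine_scale //.
have -> : 1 - 2^-1 = 2^-1 :> R by field.
rewrite -scalerDr addrACA -scalerDl -scalerDr.
have -> : (1 - 2) + (1 - 2) = - 2 :> R by lra.
by rewrite scaleNr -scalerBr scalerA mulVf ?pnatr_eq0 // scale1r.
Qed.

Lemma affine_addZ u v s : pw_const M grid u -> pw_const M grid v ->
  S (cadd u (cscale s v)) = S u + s *: lin_part S v.
Proof.
move=> hu hv; have hsv := pw_const_scale s hv.
by rewrite affine_add // -addrA -[S (cscale s v) - _]/(lin_part _ _) lin_partZ.
Qed.

End AffineMap.

Section OperatorNorm.
Variables (R : realType) (T : R).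

Lemma L2ctrl_czero : L2ctrl T (@czero R).
Proof.
split=> /=; try exact: measurable_cst;
  by under eq_integral do rewrite expr0n; rewrite integral0 ltry.
Qed.

Lemma cnorm_czero : cnorm T (@czero R) = 0.
Proof. by rewrite /cnorm /= expr0n addr0 Rintegral_cst // mul0r sqrtr0. Qed.

Lemma opnorm_ub (V : normedModType R) (A : ctrl R -> V) (K : R) :
  (forall u, L2ctrl T u -> cnorm T u <= 1 -> `|A u| <= K) ->
  forall u, L2ctrl T u -> cnorm T u <= 1 -> `|A u| <= opnorm T A.
Proof.
move=> hK u hu u_le1; apply: sup_upper_bound; last by exists u.
split.
  exists `|A (@czero R)|, (@czero R) => //.
  by split; [exact: L2ctrl_czero | rewrite cnorm_czero ler01].
by exists K => _ [v [hv v_le1] <-]; exact: hK.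
Qed.

Lemma affine_obs_bounded (V W : normedModType R) (S : ctrl R -> V)
    (f : V -> W) (c C r : R) :
  (forall w, `|f w| <= c * `|w|) ->
  (forall u, L2ctrl T u -> `|S u| <= C * (cnorm T u + r)) ->
  exists K, forall u, L2ctrl T u -> cnorm T u <= 1 -> `|f (lin_part S u)| <= K.
Proof.
move=> hf hS.
have S_bound u : L2ctrl T u -> cnorm T u <= 1 -> `|S u| <= `|C| * (1 + `|r|).
  move=> hu u_le1; apply: le_trans (hS u hu) _.
  apply: le_trans (ler_norm _) _; rewrite normrM ler_wpM2l //.
  apply: le_trans (ler_normD _ _) _; rewrite lerD2r ger0_norm //.
  exact: sqrtr_ge0.
set K := `|C| * (1 + `|r|).
exists (`|c| * (K + K)) => u hu u_le1.
apply: le_trans (hf _) (le_trans (ler_wpM2r _ (ler_norm c)) _) => //.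
rewrite ler_wpM2l // (le_trans (ler_normB _ _)) // lerD ?S_bound //.
  exact: L2ctrl_czero.
by rewrite cnorm_czero ler01.
Qed.

End OperatorNorm.

Lemma opnorm_pw_const_ub (R : realType) (T : R) (M : nat) (grid : nat -> R)
    (V : normedModType R) (A : ctrl R -> V) (K : R) :
  time_grid T M grid ->
  (forall u, L2ctrl T u -> cnorm T u <= 1 -> `|A u| <= K) ->
  (forall k u, pw_const M grid u -> A (cscale k u) = k *: A u) ->
  forall u, pw_const M grid u -> `|A u| <= opnorm T A * cnorm T u.
Proof.
move=> hgrid hK hA u hu.
have ub (k : R) : `|k| * cnorm T u <= 1 -> `|k| * `|A u| <= opnorm T A.
  rewrite -(cnorm_scale hgrid k hu) -normrZ -hA // => hk.
  by apply: (opnorm_ub hK) => //; exact/(pw_const_L2 hgrid)/pw_const_scale.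
have [n0|n_neq0] := eqVneq (cnorm T u) 0.
  rewrite n0 mulr0 leNgt; apply/negP => Au_gt0.
  have P_ge0 : 0 <= opnorm T A by have := ub 0; rewrite normr0 !mul0r ler01 => /(_ isT).
  have := ub ((opnorm T A + 1) / `|A u|).
  rewrite n0 mulr0 ler01 ger0_norm ?divr_ge0 ?addr_ge0 // divfK ?gt_eqF //.
  by move=> /(_ isT); rewrite gerDl ler10.
have n_gt0 : 0 < cnorm T u by rewrite lt_neqAle eq_sym n_neq0 sqrtr_ge0.
have := ub (cnorm T u)^-1; rewrite ger0_norm ?invr_ge0 ?sqrtr_ge0 // mulVf //.
by rewrite lexx mulrC ler_pdivrMr // => /(_ isT).
Qed.

Section PieceDirection.
Variables (R : realType) (T : R) (M : nat) (grid : nat -> R).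
Hypothesis hgrid : time_grid T M grid.
Variable j : nat.
Hypothesis jM : (j < M)%N.

(* [pw_const] attaches the value at t = 0 to the first piece. *)
Definition in_piece (t : R) : bool :=
  (grid j < t <= grid j.+1) || (j == 0)%N && (t == 0).

Definition piece_ind (t : R) : R := if in_piece t then 1 else 0.

Lemma piece_ind_on_grid i t : (i < M)%N -> grid i < t <= grid i.+1 ->
  piece_ind t = if i == j then 1 else 0.
Proof.
move=> iM ht; have t_gt0 : 0 < t.
  by case/andP: ht => gi_lt _; exact: le_lt_trans (grid_ge0 hgrid (ltnW iM)) gi_lt.
rewrite /piece_ind /in_piece (gt_eqF t_gt0) andbF orbF.
have [<-|ij] := eqVneq i j; first by rewrite ht.
case: (boolP (grid j < t <= grid j.+1)) => // hj.
by rewrite (grid_piece_uniq hgrid iM jM ht hj) eqxx in ij.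
Qed.

Lemma piece_ind0 : piece_ind 0 = if (0 == j)%N then 1 else 0.
Proof.
rewrite /piece_ind /in_piece eqxx andbT eq_sym ltNge.
by rewrite (grid_ge0 hgrid) // ltnW.
Qed.

Lemma piece_ind_step : grid_step M grid piece_ind.
Proof. by exists (fun i => if i == j then 1 else 0) => i t; exact: piece_ind_on_grid. Qed.

Definition piece_length : R := Rintegral lebesgue_measure `]0, T[ piece_ind.

Lemma piece_length_gt0 : 0 < piece_length.
Proof.
set P := [set` `]grid j, grid j.+1]].
have mP : measurable P by exact: measurable_itv.
have -> : piece_length = fine (lebesgue_measure (P `&` `]0, T[)).
  rewrite /piece_length -integral_indic // -/(Rintegral _ _ _).
  apply: eq_Rintegral => t.
  rewrite inE /= in_itv /= => /andP[t_gt0 _].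
  rewrite /piece_ind /in_piece (gt_eqF t_gt0) andbF orbF.
  have [ht|ht] := boolP (grid j < t <= grid j.+1).
    by rewrite mem_set // /P /= in_itv.
  by rewrite memNset // /P /= in_itv /= (negbTE ht).
apply: (@fine_lebesgue_measure_gt0 _ (grid j) (grid j.+1) 0 T).
- by case: hgrid => _ _; apply.
- exact: measurableI.
- move=> t /=; rewrite in_itv /= => /andP[gj_lt t_lt]; split=> /=.
    by rewrite /P /= in_itv /= gj_lt ltW.
  rewrite in_itv /= (le_lt_trans (grid_ge0 hgrid (ltnW jM)) gj_lt).
  exact: lt_le_trans t_lt (grid_leT hgrid jM).
- by move=> t [].
Qed.

Definition piece_dir (sg : R) : ctrl R := (piece_ind, fun t => - sg * piece_ind t).

Lemma pw_const_piece_dir sg : pw_const M grid (piece_dir sg).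
Proof.
exists (fun i => (if i == j then 1 else 0, - sg * if i == j then 1 else 0)).
split; rewrite /= ?piece_ind0 // => i t iM ht.
by rewrite (piece_ind_on_grid iM ht).
Qed.

Lemma cnorm_piece_dir_sqr sg : sg ^+ 2 = 1 ->
  cnorm T (piece_dir sg) ^+ 2 = 2 * piece_length.
Proof.
move=> sg2.
rewrite cnorm_sqr -(RintegralZl _ _ (grid_step_integrable hgrid piece_ind_step)) //.
apply: eq_Rintegral => t _ /=; rewrite exprMn sqrrN sg2 mul1r /piece_ind.
by case: in_piece; ring.
Qed.

End PieceDirection.

Lemma in_piece_exists (R : realType) (T : R) (M : nat) (grid : nat -> R) t :
  time_grid T M grid -> 0 < T -> 0 <= t <= T ->
  exists2 j, (j < M)%N & in_piece grid j t.
Proof.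
move=> hgrid T_gt0 /andP[t_ge0 t_leT].
have [t0|t_neq0] := eqVneq t 0.
  exists 0%N; last by rewrite /in_piece t0 !eqxx orbT.
  by case: hgrid => g0 gM _; case: M gM => [|//] gM; rewrite -gM g0 ltxx in T_gt0.
have /(grid_piece hgrid)[j jM hj] : 0 < t <= T by rewrite lt_neqAle eq_sym t_neq0 t_ge0.
by exists j; rewrite // /in_piece hj.
Qed.

Lemma pw_const_on_piece (R : realType) (M : nat) (grid : nat -> R)
    (u : ctrl R) j : (j < M)%N -> pw_const M grid u ->
  exists ab : R * R, forall t, in_piece grid j t -> u.1 t = ab.1 /\ u.2 t = ab.2.
Proof.
move=> jM [c [c01 c02 hc]]; exists (c j) => t /orP[/(hc j t jM)//|].
by case/andP => /eqP-> /eqP->.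
Qed.

Section Perturbation.
Variables (R : realType) (T : R) (M : nat) (grid : nat -> R).
Hypothesis hgrid : time_grid T M grid.
Variables (j : nat) (a b : R) (ubar : ctrl R).
Hypotheses (jM : (j < M)%N) (ab_neq0 : a * b != 0).
Hypothesis ubar_pw : pw_const M grid ubar.
Hypothesis ubar_piece : forall t, in_piece grid j t -> ubar.1 t = a /\ ubar.2 t = b.

Lemma sparsity_piece_dir : exists2 d : R, 0 < d & forall s, `|s| <= d ->
  let u := cadd ubar (cscale s (piece_dir grid j (Num.sg (a * b)))) in
  Rintegral lebesgue_measure `]0, T[ (fun t => `|u.1 t * u.2 t|)
  = Rintegral lebesgue_measure `]0, T[ (fun t => `|ubar.1 t * ubar.2 t|)
    + (s * (Num.sg (a * b) * b - a) - s ^+ 2) * piece_length T grid j.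
Proof.
have [d d_gt0 hd] := normr_mul_perturb ab_neq0.
exists d => // s hs /=.
have [u1 u2] := pw_const_step ubar_pw.
have u12 := grid_step_map2 (fun x y => `|x * y|) u1 u2.
have ind := piece_ind_step hgrid jM.
rewrite /piece_length -(Rintegral_stepD hgrid) //.
apply: eq_Rintegral => t _ /=; rewrite /piece_ind.
have [ht|_] := boolP (in_piece grid j t); last by rewrite !mulr0 !addr0.
have [-> ->] := ubar_piece ht; rewrite !mulr1 addrA -hd //; congr `|_|; ring.
Qed.

Variables (W H : normedModType R) (ipH : H -> H -> R) (obs : {linear W -> H}).
Hypothesis ipH_norm : inner_product_of_norm ipH.
Variables (S : ctrl R -> W) (yd : H) (alpha beta : R).
Hypothesis S_affine : affine_on_L2 T S.

Let v := piece_dir grid j (Num.sg (a * b)).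
Let J := Jbeta T alpha beta (fun u => obs (S u)) yd.

Lemma Jbeta_piece_dir : exists A, exists2 d : R, 0 < d & forall s, `|s| <= d ->
  J (cadd ubar (cscale s v)) = J ubar + s * A
    + s ^+ 2 * (2^-1 * `|obs (lin_part S v)| ^+ 2
                + alpha * piece_length T grid j - beta * piece_length T grid j).
Proof.
have [d d_gt0 hsparse] := sparsity_piece_dir.
have v_pw : pw_const M grid v := pw_const_piece_dir hgrid jM _.
set w := obs (S ubar) - yd; set z := obs (lin_part S v).
exists (ipH w z + alpha / 2 * Rintegral lebesgue_measure `]0, T[
          (fun t => 2 * (ubar.1 t * v.1 t + ubar.2 t * v.2 t))
        + beta * (Num.sg (a * b) * b - a) * piece_length T grid j).
exists d => // s hs.
have obsE : obs (S (cadd ubar (cscale s v))) - yd = w + s *: z.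
  by rewrite (affine_addZ hgrid) // linearD linearZ addrAC.
rewrite /J /Jbeta obsE (inner_product_normDZ _ _ _ ipH_norm).
rewrite (cnorm_sqr_addZ hgrid) // (cnorm_piece_dir_sqr hgrid) ?sqr_sg ?ab_neq0 //.
by rewrite hsparse // -/w; field.
Qed.

Lemma Jbeta_no_local_min_piece (c C r : R) :
  (forall w, `|obs w| <= c * `|w|) ->
  (forall u, L2ctrl T u -> `|S u| <= C * (cnorm T u + r)) ->
  opnorm T (fun u => obs (lin_part S u)) ^+ 2 + alpha < beta ->
  ~ exists2 e : R, 0 < e & forall u, pw_const M grid u ->
      cnorm T (csub u ubar) < e -> J ubar <= J u.
Proof.
move=> hobs hS hbeta [e e_gt0 hmin].
set P := opnorm T _ in hbeta; set m := piece_length T grid j.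
have v_pw : pw_const M grid v := pw_const_piece_dir hgrid jM _.
have [K hK] := affine_obs_bounded hobs hS.
have z_le : `|obs (lin_part S v)| <= P * cnorm T v.
  apply: (opnorm_pw_const_ub hgrid hK) => // k u hu.
  by rewrite (lin_partZ hgrid) // linearZ.
have v_sqr : cnorm T v ^+ 2 = 2 * m.
  by rewrite (cnorm_piece_dir_sqr hgrid) // sqr_sg ab_neq0.
have m_gt0 : 0 < m := piece_length_gt0 hgrid jM.
have B_lt0 : 2^-1 * `|obs (lin_part S v)| ^+ 2 + alpha * m - beta * m < 0.
  have : `|obs (lin_part S v)| ^+ 2 <= P ^+ 2 * (2 * m).
    have Pv_ge0 : 0 <= P * cnorm T v := le_trans (normr_ge0 _) z_le.
    by rewrite -v_sqr -exprMn lerXn2r ?nnegrE.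
  nra.
have [A [d d_gt0 hJ]] := Jbeta_piece_dir.
have v_ge0 : 0 <= cnorm T v := sqrtr_ge0 _.
(* For |s| <= d' the control ubar + s v lies in the e-ball around ubar. *)
pose d' := Num.min d (e / (cnorm T v + 1)).
have d'_gt0 : 0 < d' by rewrite lt_min d_gt0 divr_gt0 // ltr_wpDl.
suff : 0 <= 2^-1 * `|obs (lin_part S v)| ^+ 2 + alpha * m - beta * m.
  by rewrite leNgt B_lt0.
apply: (quadratic_local_min_lead_ge0 (A := A) d'_gt0) => s.
rewrite le_min => /andP[s_le_d s_le_e].
rewrite /m -(lerD2l (J ubar)) addr0 addrA -hJ //; apply: hmin.
  by apply: pw_const_add => //; exact: pw_const_scale.
rewrite csub_addZ (cnorm_scale hgrid) //.
apply: le_lt_trans (ler_wpM2r v_ge0 s_le_e) _.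
by rewrite mulrAC ltr_pdivrMr ?ltr_wpDl // ltr_pM2l // ltrDl.
Qed.

End Perturbation.

Unset Implicit Arguments.

Theorem theorem3p3 (R : realType)
  (W : completeNormedModType R) (ipW : W -> W -> R)
  (H : completeNormedModType R) (ipH : H -> H -> R)
  (Y0 : normedModType R) (y0 : Y0)
  (obs : {linear W -> H})
  (T alpha beta : R) (M : nat) (grid : nat -> R)
  (S : ctrl R -> W) (yd : H) (ubar : ctrl R) :
  0 < T ->
  time_grid T M grid ->
  inner_product_of_norm ipW ->
  inner_product_of_norm ipH ->
  (exists c : R, forall w : W, `|obs w| <= c * `|w|) ->
  affine_on_L2 T S ->
  continuous_on_L2 T S ->
  (exists C : R, forall u, L2ctrl T u -> `|S u| <= C * (cnorm T u + `|y0|)) ->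
  0 < alpha ->
  opnorm T (fun u => obs (lin_part S u)) ^+ 2 + alpha < beta ->
  pw_const M grid ubar ->
  (exists2 e : R, 0 < e & forall u, pw_const M grid u ->
      cnorm T (csub u ubar) < e ->
      Jbeta T alpha beta (fun v => obs (S v)) yd ubar
        <= Jbeta T alpha beta (fun v => obs (S v)) yd u) ->
  forall t : R, 0 <= t <= T -> ubar.1 t * ubar.2 t = 0.
Proof.
move=> T_gt0 hgrid _ ipH_norm [c hobs] S_affine _ [C hS] _ hbeta ubar_pw hmin t ht.
have [j jM t_in] := in_piece_exists hgrid T_gt0 ht.
have [[a b] ubar_piece] := pw_const_on_piece jM ubar_pw.
have [-> ->] := ubar_piece t t_in.
apply/eqP/contraT => ab_neq0; exfalso.
exact: (Jbeta_no_local_min_piece hgrid jM ab_neq0 ubar_pw ubar_piece ipH_norm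
  S_affine hobs hS hbeta hmin).
Qed.
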